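(* \textsc{RN3DM} reduces to \textsc{IN3DM} in polynomial time.
   Context: \textsc{RN3DM}: given a multiset of positive integers $A=\{a_1,\dots,a_n\}$, sets $B=C=\{1,\dots,n\}$ and an integer $\sigma$ with $\sum_{i=1}^n(a_i+2i)=n\sigma$, decide whether there is $M\subseteq A\times B\times C$ in which every element of $A$, $B$, $C$ occurs exactly once and every triple $(a,b,c)\in M$ satisfies $a+b+c=\sigma$. \textsc{IN3DM}: given a multiset of positive integers $A=\{a_1,\dots,a_n\}$, the set $B=\{1,\dots,n\}$ and a multiset of positive integers (targets) $T=\{t_1,\dots,t_n\}$, decide whether there is $M\subseteq A\times B\times T$ in which every element of $A$, $B$, $T$ occurs exactly once and every triple $(a,b,t)\in M$ satisfies $a+b\ge t$. *)

From mathcomp Require Import all_boot all_fingroup.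
Set Implicit Arguments. Unset Strict Implicit. Unset Printing Implicit Defensive.

(* The two problems.  A multiset of n positive integers is a seq nat  *)
(* of size n (all entries > 0); B = C = {1,...,n}.  A matching using  *)
(* every element of A, B, C (resp. A, B, T) exactly once is given by  *)
(* bijections (permutations of the index set 'I_n) assigning to the   *)
(* i-th element of A its partners.                                    *)

Definition rn3dm_instance (A : seq nat) (sigma : nat) : Prop :=
  all (fun a => 0 < a) A /\
  \sum_(i < size A) (nth 0 A i + 2 * i.+1) = size A * sigma.

Definition rn3dm_yes (A : seq nat) (sigma : nat) : Prop :=
  exists (beta gamma : {perm 'I_(size A)}),
    forall i : 'I_(size A),
      nth 0 A i + (beta i).+1 + (gamma i).+1 = sigma.

Definition in3dm_instance (A T : seq nat) : Prop :=
  size A = size T /\ all (fun a => 0 < a) A /\ all (fun t => 0 < t) T.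

Definition in3dm_yes (A T : seq nat) : Prop :=
  exists (beta tau : {perm 'I_(size A)}),
    forall i : 'I_(size A),
      nth 0 T (tau i) <= nth 0 A i + (beta i).+1.

(* (With only + and -, unit-cost RAM time is polynomially equivalent  *)
(* to Turing machine time on the binary encoding.)                    *)

Inductive instr : Type :=
| IConst of nat & nat
| IAdd   of nat & nat & nat
| ISub   of nat & nat & nat
| ILoad  of nat & nat
| IStore of nat & nat
| IJz    of nat & nat.

Record config : Type := Config {
  pc  : nat;
  reg : nat -> nat;
  mem : nat -> nat }.

Definition upd (f : nat -> nat) (x v : nat) : nat -> nat :=
  fun y => if y == x then v else f y.

Definition halted (P : seq instr) (c : config) : bool := size P <= pc c.

Definition step (P : seq instr) (c : config) : config :=
  let R := reg c in let M := mem c in let p := pc c in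
  match nth (IConst 0 0) P p with
  | IConst d k  => Config p.+1 (upd R d k) M
  | IAdd d a b  => Config p.+1 (upd R d (R a + R b)) M
  | ISub d a b  => Config p.+1 (upd R d (R a - R b)) M
  | ILoad d a   => Config p.+1 (upd R d (M (R a))) M
  | IStore a s  => Config p.+1 R (upd M (R a) (R s))
  | IJz r l     => Config (if R r == 0 then l else p.+1) R M
  end.

Fixpoint exec (P : seq instr) (fuel : nat) (c : config) : option config :=
  if halted P c then Some c else
  match fuel with
  | 0 => None
  | k.+1 => exec P k (step P c)
  end.

Definition init_config (input : seq nat) : config :=
  Config 0 (upd (fun _ => 0) 0 (size input)) (fun j => nth 0 input j).

Definition output (c : config) : seq nat := mkseq (mem c) (reg c 0).

Definition computes_within (P : seq instr) (input : seq nat) (t : nat)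
    (out : seq nat) : Prop :=
  exists c, exec P t (init_config input) = Some c /\ output c = out.

Definition bitlen (x : nat) : nat := (trunc_log 2 x).+1.
Definition enc_size (s : seq nat) : nat := \sum_(x <- s) bitlen x.

From mathcomp Require Import all_boot all_fingroup.
From mathcomp Require Import zify.
Set Implicit Arguments. Unset Strict Implicit. Unset Printing Implicit Defensive.

(* Keep A and take the targets t_k = sigma - k (k = 1..n): then a + b >= t_k
   reads a + b + k >= sigma, so an RN3DM matching is an IN3DM matching.
   Conversely, permuting B and C does not change the total of the a_i + b_i + c_i,
   which the balance condition fixes to n * sigma; hence the n inequalities
   a_i + b_i + c_i >= sigma of an IN3DM matching are all equalities.  The same
   balance condition gives sigma >= n + 2, so the targets are positive.  A
   two-loop RAM program writes A ++ T in 15 n + 11 steps. *)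

Lemma eq_of_leq_sum (I : finType) (E1 E2 : I -> nat) :
  (forall i, E1 i <= E2 i) -> \sum_i E1 i = \sum_i E2 i -> forall i, E1 i = E2 i.
Proof.
move=> le12 /eqP; rewrite (leqif_sum (fun i _ => leqif_eq (le12 i))).
by move=> /forallP eq12 i; apply/eqP/eq12.
Qed.

Lemma sum_perm_succ n (s : {perm 'I_n}) : \sum_i (s i).+1 = \sum_(i < n) i.+1.
Proof. by rewrite [RHS](reindex_inj (@perm_inj _ s)). Qed.

Lemma sum_double_succ n : \sum_(i < n) (2 * i.+1) = n * n.+1.
Proof. by elim: n => [|n IH]; rewrite ?big_ord0 // big_ord_recr /= IH; lia. Qed.

Definition targets (sigma n : nat) : seq nat := mkseq (fun k => sigma - k.+1) n.

Lemma size_targets sigma n : size (targets sigma n) = n.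
Proof. exact: size_mkseq. Qed.

Lemma nth_targets sigma n k : k < n -> nth 0 (targets sigma n) k = sigma - k.+1.
Proof. exact: nth_mkseq. Qed.

Lemma targets_pos sigma n : n < sigma -> all (fun t => 0 < t) (targets sigma n).
Proof.
move=> lt_n_sigma; apply/(all_nthP 0) => k; rewrite size_targets => lt_k_n.
by rewrite nth_targets // subn_gt0; apply: leq_ltn_trans lt_n_sigma.
Qed.

Section RN3DM.
Variables (A : seq nat) (sigma : nat).
Hypothesis instA : rn3dm_instance A sigma.
Local Notation n := (size A).

Lemma rn3dm_size_lt : 0 < n -> n < sigma.
Proof.
case: instA => /(all_nthP 0) A_pos sumA n_gt0.
have : \sum_(i < n) (1 + 2 * i.+1) <= n * sigma.
  by rewrite -sumA; apply: leq_sum => i _; rewrite leq_add2r A_pos.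
rewrite big_split sum_nat_const card_ord sum_double_succ muln1 /= -mulnS.
by rewrite leq_pmul2l // => /ltnW.
Qed.

Lemma in3dm_targets_instance : in3dm_instance A (targets sigma n).
Proof.
split; first by rewrite size_targets.
split; first by case: instA.
by case: (posnP n) => [-> // | /rn3dm_size_lt/targets_pos].
Qed.

Lemma sum_rn3dm_triples (beta gamma : {perm 'I_n}) :
  \sum_(i < n) (nth 0 A i + (beta i).+1 + (gamma i).+1) = \sum_(i < n) sigma.
Proof.
rewrite sum_nat_const card_ord -instA.2 !big_split /= !sum_perm_succ -addnA.
congr (_ + _); rewrite -big_split; apply: eq_bigr => i _.
by rewrite /= addnn -mul2n.
Qed.

Lemma rn3dm_yes_iff_in3dm_targets :
  rn3dm_yes A sigma <-> in3dm_yes A (targets sigma n).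
Proof.
split=> [[beta [gamma sum_sigma]] | [beta [tau le_targets]]]; exists beta.
  by exists gamma => i; rewrite nth_targets // -(sum_sigma i) addnK.
exists tau => i; symmetry; move: i.
apply: eq_of_leq_sum (esym (sum_rn3dm_triples beta tau)) => i.
by rewrite addnC -leq_subLR -(nth_targets sigma (ltn_ord (tau i))) le_targets.
Qed.

End RN3DM.

Section Runs.
Variable P : seq instr.

Definition runs_to (k : nat) (c c' : config) : Prop :=
  forall f, exec P (k + f) c = exec P f c'.

Lemma runs_to0 c : runs_to 0 c c.
Proof. by []. Qed.

Lemma runs_toS k c c' :
  ~~ halted P c -> runs_to k (step P c) c' -> runs_to k.+1 c c'.
Proof. by move=> /negbTE halt_c run f; rewrite addSn /= halt_c. Qed.

Lemma runs_to_trans k1 k2 c1 c2 c3 :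
  runs_to k1 c1 c2 -> runs_to k2 c2 c3 -> runs_to (k1 + k2) c1 c3.
Proof. by move=> run12 run23 f; rewrite -addnA run12 run23. Qed.

Lemma runs_to_loop (Inv : nat -> config -> Prop) (Post : config -> Prop) n k k' :
    (forall i c, i < n -> Inv i c -> exists2 c', runs_to k c c' & Inv i.+1 c') ->
    (forall c, Inv n c -> exists2 c', runs_to k' c c' & Post c') ->
  forall c, Inv 0 c -> exists2 c', runs_to (n * k + k') c c' & Post c'.
Proof.
move=> body exit; suff loop m i c : i + m = n -> Inv i c ->
    exists2 c', runs_to (m * k + k') c c' & Post c' by move=> c; apply: loop.
elim: m i c => [|m IH] i c; first by rewrite addn0 => ->; apply: exit.
move=> im_n inv_i; have [|c1 run1 inv1] := body i c _ inv_i; first lia.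
have [|c' run' post] := IH i.+1 c1 _ inv1; first lia.
by exists c' => //; rewrite mulSn -addnA; apply: runs_to_trans run'.
Qed.

Lemma computes_within_runs_to input k c :
  runs_to k (init_config input) c -> halted P c ->
  computes_within P input k (output c).
Proof.
move=> run halt_c; exists c; split=> //.
by rewrite -[k]addn0 run; case: (0) => /=; rewrite halt_c.
Qed.

End Runs.

(* Registers: R1 = 1, R2 = 0 (so [IJz 2 l] is an unconditional jump), R3 = sigma,
   R4 = n, R5 = loop counter.  The first loop (pc 5-11) shifts A one word down,
   over sigma; the second (pc 13-20) stores sigma - k.+1 at address n + k. *)
Definition reduction_prog : seq instr :=
  [:: IConst 1 1; IConst 2 0; ILoad 3 2; ISub 4 0 1; IConst 5 0;
      ISub 6 4 5; IJz 6 12;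
        IAdd 7 5 1; ILoad 8 7; IStore 5 8; IAdd 5 5 1; IJz 2 5;
      IConst 5 0;
      ISub 6 4 5; IJz 6 21;
        IAdd 7 4 5; IAdd 9 5 1; ISub 8 3 9; IStore 7 8; IAdd 5 5 1; IJz 2 13;
      IAdd 0 4 4].

Ltac run_step := apply: runs_toS; first by []; rewrite /step /upd /=.

Section ReductionProgram.
Variables (A : seq nat) (sigma : nat).
Local Notation n := (size A).
Local Notation T := (targets sigma n).

Definition loop_regs (R : nat -> nat) :=
  [/\ R 1 = 1, R 2 = 0, R 3 = sigma & R 4 = n].

Definition shift_inv i c := let: Config p R M := c in
  [/\ p = 5, loop_regs R, R 5 = i &
   forall j, M j = if j < i then nth 0 A j else nth 0 (sigma :: A) j].

Definition fill_inv k c := let: Config p R M := c in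
  [/\ p = 13, loop_regs R, R 5 = k &
   forall j, j < n + k -> M j = nth 0 (A ++ T) j].

Lemma prologue_runs_to :
  exists2 c, runs_to reduction_prog 5 (init_config (sigma :: A)) c &
    shift_inv 0 c.
Proof.
eexists; first by do 5 run_step; apply: runs_to0.
by split=> //=; rewrite subn1.
Qed.

Lemma shift_step i c : i < n -> shift_inv i c ->
  exists2 c', runs_to reduction_prog 7 c c' & shift_inv i.+1 c'.
Proof.
case: c => p R M lt_i_n [/= -> [R1 R2 R3 R4] R5 M_i].
eexists.
  run_step; run_step; rewrite R4 R5 subn_eq0 leqNgt lt_i_n /=.
  by do 5 run_step; rewrite R2; apply: runs_to0.
split=> //=; rewrite R5 R1 ?addn1 // => j.
rewrite !M_i ltnS; case: eqVneq => [-> | ne_ji].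
  by rewrite leqnn ltnNge leqnSn.
by rewrite (leq_eqVlt j) (negbTE ne_ji).
Qed.

Lemma shift_exit c : shift_inv n c ->
  exists2 c', runs_to reduction_prog 3 c c' & fill_inv 0 c'.
Proof.
case: c => p R M [/= -> [R1 R2 R3 R4] R5 M_n].
eexists; first by run_step; rewrite R4 R5 subnn; do 2 run_step; apply: runs_to0.
split=> //= j; rewrite addn0 M_n => lt_j_n.
by rewrite lt_j_n nth_cat lt_j_n.
Qed.

Lemma fill_step k c : k < n -> fill_inv k c ->
  exists2 c', runs_to reduction_prog 8 c c' & fill_inv k.+1 c'.
Proof.
case: c => p R M lt_k_n [/= -> [R1 R2 R3 R4] R5 M_k].
eexists.
  run_step; run_step; rewrite R4 R5 subn_eq0 leqNgt lt_k_n /=.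
  by do 6 run_step; rewrite R2; apply: runs_to0.
split=> //=; rewrite R5 R1 ?addn1 // => j; rewrite R3 R4 addnS ltnS.
case: eqVneq => [-> _ | ne_jk lt_j].
  by rewrite nth_cat ltnNge leq_addr addKn nth_targets.
by apply: M_k; rewrite ltn_neqAle ne_jk.
Qed.

Lemma fill_exit c : fill_inv n c ->
  exists2 c', runs_to reduction_prog 3 c c' &
    halted reduction_prog c' /\ output c' = A ++ T.
Proof.
case: c => p R M [/= -> [R1 R2 R3 R4] R5 M_n].
eexists; first by run_step; rewrite R4 R5 subnn; do 2 run_step; apply: runs_to0.
split=> //; rewrite /output /= R4.
apply: (@eq_from_nth _ 0).
  by rewrite size_mkseq size_cat size_targets.
by move=> j; rewrite size_mkseq => lt_j; rewrite nth_mkseq ?M_n.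
Qed.

Lemma reduction_prog_computes :
  computes_within reduction_prog (sigma :: A) (15 * n + 11) (A ++ T).
Proof.
have [c0 run0 inv0] := prologue_runs_to.
have [c1 run1 inv1] := runs_to_loop shift_step shift_exit inv0.
have [c2 run2 [halt2 out2]] := runs_to_loop fill_step fill_exit inv1.
rewrite -out2; apply: computes_within_runs_to halt2.
have -> : 15 * n + 11 = 5 + (n * 7 + 3) + (n * 8 + 3) by lia.
exact: runs_to_trans (runs_to_trans run0 run1) run2.
Qed.

End ReductionProgram.

Lemma size_le_enc_size s : size s <= enc_size s.
Proof. by rewrite /enc_size -sum1_size; apply: leq_sum. Qed.

Theorem theorem6 :
  exists (P : seq instr) (c d : nat),
    forall (A : seq nat) (sigma : nat),
      rn3dm_instance A sigma ->
      exists (A' T' : seq nat) (t : nat),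
        [/\ t <= c * (enc_size (sigma :: A)).+1 ^ d,
            computes_within P (sigma :: A) t (A' ++ T'),
            in3dm_instance A' T' &
            (rn3dm_yes A sigma <-> in3dm_yes A' T')].
Proof.
exists reduction_prog, 20, 1 => A sigma instA.
exists A, (targets sigma (size A)), (15 * size A + 11); split.
- by have := size_le_enc_size (sigma :: A); rewrite expn1 /=; lia.
- exact: reduction_prog_computes.
- exact: in3dm_targets_instance.
- exact: rn3dm_yes_iff_in3dm_targets.
Qed.
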